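(* Let $\alpha \in (0,1)$ and $x \in I_\alpha$. Then $x \in \mathbb Q$ if and only if there is an integer $N \ge 0$ such that $T_\alpha^N(x) = 1$.
   Context: For $\alpha \in (0,1)$ let $D_\alpha = \bigcup_{n \ge 1} \big[ \frac{1}{n+\alpha}, \frac1n \big]$, $D_\alpha^{\mathsf c} = [0,1]\setminus D_\alpha$, $I_\alpha = [\min\{\alpha,1-\alpha\},1]$, and $T_\alpha : I_\alpha \to I_\alpha$, $T_\alpha(x) = \frac1x - \lfloor \frac1x \rfloor$ if $x \in D_\alpha^{\mathsf c}$, $T_\alpha(x) = 1 + \lfloor \frac1x \rfloor - \frac1x$ if $x \in D_\alpha$. *)

From Stdlib Require Import Reals ClassicalDescription.
Open Scope R_scope.

(* floor function: Int_part r = up r - 1 = floor r *)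
Definition floorR (r : R) : R := IZR (Int_part r).

Definition in_D (alpha x : R) : Prop :=
  exists n : nat, (1 <= n)%nat /\ 1 / (INR n + alpha) <= x /\ x <= 1 / INR n.

Definition in_I (alpha x : R) : Prop := Rmin alpha (1 - alpha) <= x /\ x <= 1.

(* T_alpha; defined classically on all of R, only used on I_alpha *)
Definition T (alpha x : R) : R :=
  match excluded_middle_informative (in_D alpha x) with
  | left _ => 1 + floorR (1 / x) - 1 / x
  | right _ => 1 / x - floorR (1 / x)
  end.

Definition is_rational (x : R) : Prop :=
  exists (p q : Z), q <> 0%Z /\ x = IZR p / IZR q.

From Stdlib Require Import Reals ZArith Lia Lra ClassicalDescription.
Open Scope R_scope.

(* On each branch, [T alpha x = a + b / x] with [a] an integer and [b = 1] or
   [b = -1], so [T alpha x] is rational only if [x] is; since [1] is rational,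
   this gives the "if" direction.  For the converse, [T alpha] maps [(0, 1]]
   into itself, so it sends [p / q] with [0 < p < q] to some [r / p] with
   [0 < r <= p]: the denominator strictly decreases, and the descent can only
   stop at [p = q], i.e. at the value [1]. *)

Lemma Rinv_le_swap_l (x y : R) : 0 < x -> 0 < y -> / x <= y -> / y <= x.
Proof.
  intros Hx Hy H. rewrite <- (Rinv_inv x).
  apply Rinv_le_contravar; [apply Rinv_0_lt_compat |]; assumption.
Qed.

Lemma Rinv_le_swap_r (x y : R) : 0 < x -> x <= / y -> y <= / x.
Proof.
  intros Hx H. rewrite <- (Rinv_inv y). apply Rinv_le_contravar; assumption.
Qed.

Lemma in_D_iff (alpha x : R) : 0 <= alpha -> 0 < x ->
  in_D alpha x <-> exists n : nat, (1 <= n)%nat /\ INR n <= / x <= INR n + alpha.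
Proof.
  intros Ha Hx. unfold in_D. setoid_rewrite Rdiv_1_l.
  split; intros (n & Hn & H1 & H2); exists n; split; try exact Hn;
    assert (Hn0 : 0 < INR n) by (apply lt_0_INR; lia).
  - split; [apply Rinv_le_swap_r | apply Rinv_le_swap_l]; auto; lra.
  - split; [apply Rinv_le_swap_l | apply Rinv_le_swap_r]; auto; lra.
Qed.

Lemma T_integral_mobius (alpha x : R) :
  exists a b : Z, (b = 1 \/ b = -1)%Z /\ T alpha x = IZR a + IZR b * / x.
Proof.
  unfold T, floorR. rewrite Rdiv_1_l.
  destruct excluded_middle_informative.
  - exists (1 + Int_part (/ x))%Z, (-1)%Z. split; [lia |]. rewrite plus_IZR. lra.
  - exists (- Int_part (/ x))%Z, 1%Z. split; [lia |]. rewrite opp_IZR. lra.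
Qed.

Lemma ratio_unit_interval (p q : Z) :
  (0 < q)%Z -> (0 < IZR p / IZR q <= 1 <-> (0 < p <= q)%Z).
Proof.
  intros Hq. apply IZR_lt in Hq.
  assert (Hp : IZR p = IZR p / IZR q * IZR q) by (field; lra).
  split.
  - intros [H0 H1]. split; [apply lt_IZR | apply le_IZR]; rewrite Hp; nra.
  - intros [H0 H1]. apply IZR_lt in H0. apply IZR_le in H1.
    split; [apply Rdiv_lt_0_compat; lra |].
    apply Rmult_le_reg_r with (IZR q); [lra |]. rewrite <- Hp. lra.
Qed.

Section Descent.

Variable alpha : R.
Hypothesis alpha_range : 0 < alpha < 1.

Lemma T_in_D (x : R) : 0 < x -> in_D alpha x -> 1 - alpha <= T alpha x <= 1.
Proof.
  intros Hx HD.
  destruct ((proj1 (in_D_iff alpha x ltac:(lra) Hx)) HD) as (n & _ & Hn).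
  assert (Hfloor : Z.of_nat n = Int_part (/ x)).
  { apply Int_part_spec. rewrite <- INR_IZR_INZ. lra. }
  unfold T, floorR. rewrite Rdiv_1_l, <- Hfloor, <- INR_IZR_INZ.
  destruct excluded_middle_informative; [lra | contradiction].
Qed.

Lemma T_notin_D (x : R) : 0 < x <= 1 -> ~ in_D alpha x -> alpha < T alpha x <= 1.
Proof.
  intros Hx HD.
  assert (Hinv : 1 <= / x).
  { rewrite <- Rinv_1. apply Rinv_le_contravar; lra. }
  destruct (base_Int_part (/ x)) as [Hle Hgt].
  set (F := Int_part (/ x)) in *.
  assert (HF : (1 <= F)%Z) by (assert (HF0 : 0 < IZR F) by lra; apply lt_IZR in HF0; lia).
  assert (Hfrac : alpha < / x - IZR F).
  { apply Rnot_le_lt. intro Hsmall. apply HD, in_D_iff; [lra | lra |].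
    exists (Z.to_nat F). rewrite INR_IZR_INZ, Z2Nat.id by lia. split; [lia | lra]. }
  unfold T, floorR. rewrite Rdiv_1_l. fold F.
  destruct excluded_middle_informative; [contradiction | lra].
Qed.

Lemma T_maps_unit_interval (x : R) : 0 < x <= 1 -> 0 < T alpha x <= 1.
Proof.
  intros Hx. destruct (excluded_middle_informative (in_D alpha x)) as [HD | HD].
  - pose proof (T_in_D x (proj1 Hx) HD). lra.
  - pose proof (T_notin_D x Hx HD). lra.
Qed.

Lemma T_ratio_step (p q : Z) : (0 < p <= q)%Z ->
  exists r : Z, (0 < r <= p)%Z /\ T alpha (IZR p / IZR q) = IZR r / IZR p.
Proof.
  intros Hpq.
  assert (Hx : 0 < IZR p / IZR q <= 1) by (apply ratio_unit_interval; lia).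
  assert (Hp : 0 < IZR p) by (apply IZR_lt; lia).
  assert (Hq : 0 < IZR q) by (apply IZR_lt; lia).
  destruct (T_integral_mobius alpha (IZR p / IZR q)) as (a & b & _ & HT).
  assert (Hr : T alpha (IZR p / IZR q) = IZR (a * p + b * q) / IZR p).
  { rewrite HT, plus_IZR, !mult_IZR. field. lra. }
  exists (a * p + b * q)%Z. split; [| exact Hr].
  apply ratio_unit_interval; [lia |]. rewrite <- Hr.
  apply T_maps_unit_interval; assumption.
Qed.

Lemma iter_T_ratio_reaches_one (q : Z) : (0 <= q)%Z ->
  forall p : Z, (0 < p <= q)%Z -> exists N : nat, Nat.iter N (T alpha) (IZR p / IZR q) = 1.
Proof.
  revert q. refine (Zlt_0_ind _ _). intros q IH _ p Hpq.
  destruct (Z.eq_dec p q) as [-> | Hne].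
  - exists 0%nat. simpl. field. apply not_0_IZR. lia.
  - destruct (T_ratio_step p q Hpq) as (r & Hr & HT).
    destruct (IH p ltac:(lia) r Hr) as [N HN].
    exists (S N). rewrite Nat.iter_succ_r, HT. exact HN.
Qed.

End Descent.

Lemma is_rational_pos_den (x : R) :
  is_rational x -> exists p q : Z, (0 < q)%Z /\ x = IZR p / IZR q.
Proof.
  intros (p & q & Hq & Hx).
  destruct (Z_lt_le_dec 0 q).
  - exists p, q. auto.
  - exists (- p)%Z, (- q)%Z. split; [lia |].
    rewrite Hx, !opp_IZR. field. apply not_0_IZR. exact Hq.
Qed.

Lemma is_rational_integral_affine (a b : Z) (r : R) :
  is_rational r -> is_rational (IZR a + IZR b * r).
Proof.
  intros (P & Q & HQ & ->). exists (a * Q + b * P)%Z, Q. split; [exact HQ |].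
  rewrite plus_IZR, !mult_IZR. field. apply not_0_IZR. exact HQ.
Qed.

Lemma is_rational_inv (r : R) : is_rational r -> is_rational (/ r).
Proof.
  intros (P & Q & HQ & ->).
  assert (HQ' : IZR Q <> 0) by (apply not_0_IZR; exact HQ).
  destruct (Z.eq_dec P 0) as [-> | HP].
  - exists 0%Z, 1%Z. split; [lia |]. rewrite Rdiv_0_l, Rinv_0. field.
  - exists Q, P. split; [exact HP |]. field. split; [apply not_0_IZR |]; assumption.
Qed.

Lemma is_rational_of_T (alpha x : R) : is_rational (T alpha x) -> is_rational x.
Proof.
  intros Hrat. destruct (T_integral_mobius alpha x) as (a & b & Hb & HT).
  assert (Hinv : / x = IZR 0 + IZR b * (IZR (- a) + IZR 1 * T alpha x)).
  { rewrite HT, opp_IZR. destruct Hb as [-> | ->]; simpl; ring. }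
  rewrite <- (Rinv_inv x), Hinv.
  apply is_rational_inv, is_rational_integral_affine, is_rational_integral_affine.
  exact Hrat.
Qed.

Lemma is_rational_of_iter_T (alpha : R) (N : nat) (x : R) :
  is_rational (Nat.iter N (T alpha) x) -> is_rational x.
Proof.
  revert x. induction N as [| N IH]; intros x Hrat; [exact Hrat |].
  rewrite Nat.iter_succ_r in Hrat. apply (is_rational_of_T alpha), IH, Hrat.
Qed.

Lemma in_I_unit_interval (alpha x : R) : 0 < alpha < 1 -> in_I alpha x -> 0 < x <= 1.
Proof.
  intros Ha [H0 H1]. unfold Rmin in H0. destruct Rle_dec; lra.
Qed.

Theorem proposition2p1 (alpha x : R) :
  0 < alpha < 1 -> in_I alpha x ->
  (is_rational x <-> exists N : nat, Nat.iter N (T alpha) x = 1).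
Proof.
  intros Ha HI. pose proof (in_I_unit_interval alpha x Ha HI) as Hx.
  split.
  - intros Hrat. destruct (is_rational_pos_den x Hrat) as (p & q & Hq & ->).
    apply (iter_T_ratio_reaches_one alpha Ha q); [lia |].
    apply ratio_unit_interval; assumption.
  - intros [N HN]. apply (is_rational_of_iter_T alpha N). rewrite HN.
    exists 1%Z, 1%Z. split; [lia |]. field.
Qed.
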